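(* If $f:A\to B$ and $g:B\to D$ are strict morphisms between objects of $\mathcal G$, then $g\circ f:A\to D$ is a strict morphism.
   Context: Let $\Lambda$ be a finite dimensional algebra over a field and $\mathrm{mod}\text-\Lambda$ the category of finitely generated right $\Lambda$-modules. Fix a torsion class $\mathcal G\subseteq\mathrm{mod}\text-\Lambda$, i.e. a class of modules closed under isomorphisms, extensions and quotients. For $B\in\mathcal G$, a subobject of $B$ is a submodule of $B$ that lies in $\mathcal G$. A subobject $A\subseteq B$ is a strict subobject if $A\cap B'\in\mathcal G$ for every subobject $B'$ of $B$. A strict morphism is a module homomorphism $f:A\to B$ with $A,B\in\mathcal G$ such that $\ker f\in\mathcal G$, $\ker f$ is a strict subobject of $A$, and $\operatorname{im} f$ is a strict subobject of $B$ (equivalently, $f$ is the composition of a surjection onto a strict quotient of $A$ followed by the inclusion of a strict subobject of $B$). *)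

From HB Require Import structures.
From mathcomp Require Import all_boot all_order all_algebra all_field.
Set Implicit Arguments. Unset Strict Implicit. Unset Printing Implicit Defensive.
Import GRing.Theory.
Local Open Scope ring_scope.

(* A finitely generated right Lambda-module is a finite dimensional K-space;
   we model it (up to isomorphism) as row vectors K^n with a right action
   v . a := v *m ract a, where ract : Lambda -> 'M_n is a unital,
   multiplicative, K-linear map.  Module homomorphisms are matrices
   f with v |-> v *m f commuting with the action; composition of
   f : A -> B and g : B -> D is f *m g. *)
Section Modules.
Variables (K : fieldType) (L : falgType K).

Record rmod := RMod {
  rdim : nat;
  ract : L -> 'M[K]_rdim;
  ract_lin : forall (k : K) (a b : L), ract (k *: a + b) = k *: ract a + ract b;
  ract1 : ract 1 = 1%:M;
  ractM : forall a b : L, ract (a * b) = ract a *m ract b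
}.

Definition is_hom (M N : rmod) (f : 'M[K]_(rdim M, rdim N)) : Prop :=
  forall a : L, ract M a *m f = f *m ract N a.

Definition is_submod (M : rmod) (r : nat) (U : 'M[K]_(r, rdim M)) : Prop :=
  forall a : L, (U *m ract M a <= U)%MS.

Definition torsion_class (G : rmod -> Prop) : Prop :=
  [/\ (forall (M N : rmod) (f : 'M[K]_(rdim M, rdim N)),
         is_hom f -> row_free f -> row_full f -> G M -> G N),
      (forall (M N : rmod) (f : 'M[K]_(rdim M, rdim N)),
         is_hom f -> row_full f -> G M -> G N) &
      (forall (M1 M M2 : rmod) (f : 'M[K]_(rdim M1, rdim M))
              (g : 'M[K]_(rdim M, rdim M2)),
         is_hom f -> is_hom g -> row_free f -> row_full g ->
         (f == kermx g)%MS -> G M1 -> G M2 -> G M)].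

Definition inG (G : rmod -> Prop) (M : rmod) (r : nat)
    (U : 'M[K]_(r, rdim M)) : Prop :=
  exists N : rmod, G N /\
    exists h : 'M[K]_(rdim N, rdim M),
      [/\ is_hom h, row_free h & (h == U)%MS].

Definition subobject (G : rmod -> Prop) (M : rmod) (r : nat)
    (U : 'M[K]_(r, rdim M)) : Prop :=
  is_submod U /\ inG G U.

Definition strict_subobject (G : rmod -> Prop) (M : rmod) (r : nat)
    (U : 'M[K]_(r, rdim M)) : Prop :=
  subobject G U /\
  forall (r' : nat) (B' : 'M[K]_(r', rdim M)),
    subobject G B' -> inG G (U :&: B')%MS.

Definition strict_morphism (G : rmod -> Prop) (A B : rmod)
    (f : 'M[K]_(rdim A, rdim B)) : Prop :=
  [/\ G A, G B, is_hom f,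
      inG G (kermx f) &
      (strict_subobject G (kermx f) /\ strict_subobject G f)].

End Modules.

From mathcomp Require Import all_boot all_order all_algebra all_field.
Set Implicit Arguments. Unset Strict Implicit. Unset Printing Implicit Defensive.
Import GRing.Theory.
Local Open Scope ring_scope.

(* Submodules are row spaces; restricting the action to a row base turns a
   submodule into a module, so "lies in G" can be tested with the closure
   properties of G.  Strictness of the kernel of g f: for a subobject A' of A,
   ker (g f) :&: A' is an extension of ker f :&: A' by f(A') :&: ker g, both in G
   by strictness of ker f and ker g.  Strictness of the image: for a subobject
   D' of D, the preimage g^-1(D') is an extension of ker g by g(B) :&: D', hence
   a subobject of B, and (g f)(A) :&: D' is the image under g of
   f(A) :&: g^-1(D'), which lies in G by strictness of the image of f. *)

Section InducedMatrices.
Variable F : fieldType.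

Definition inducedmx m n r s (U : 'M[F]_(r, m)) (V : 'M[F]_(s, n))
    (h : 'M[F]_(m, n)) : 'M[F]_(\rank U, \rank V) :=
  row_base U *m h *m pinvmx (row_base V).

Section Induced.
Variables (m n r s : nat) (U : 'M[F]_(r, m)) (V : 'M[F]_(s, n)).
Variable h : 'M[F]_(m, n).
Hypothesis sUhV : (U *m h <= V)%MS.

Lemma inducedmxK : inducedmx U V h *m row_base V = row_base U *m h.
Proof. by rewrite mulmxKpV // eq_row_base (eqmxMr h (eq_row_base U)). Qed.

Lemma mxrank_inducedmx : \rank (inducedmx U V h) = \rank (U *m h).
Proof.
by rewrite -(mxrankMfree _ (row_base_free V)) inducedmxK (eqmxMr h (eq_row_base U)).
Qed.

Lemma row_free_inducedmx : row_free h -> row_free (inducedmx U V h).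
Proof. by move=> free_h; rewrite /row_free mxrank_inducedmx mxrankMfree. Qed.

End Induced.

Lemma row_full_inducedmx m n r s (U : 'M[F]_(r, m)) (V : 'M[F]_(s, n))
    (h : 'M[F]_(m, n)) :
  (U *m h :=: V)%MS -> row_full (inducedmx U V h).
Proof. by move=> eqUhV; rewrite /row_full mxrank_inducedmx eqUhV. Qed.

(* In row-base coordinates, the inclusion of U :&: ker h into U is the kernel
   of the map from U onto U h induced by h. *)
Lemma inducedmx_capker m n r (U : 'M[F]_(r, m)) (h : 'M[F]_(m, n)) :
  (inducedmx (U :&: kermx h)%MS U 1%:M
    == kermx (inducedmx U (U *m h) h))%MS.
Proof.
set W := (U :&: kermx h)%MS; set i := inducedmx W U 1%:M.
set p := inducedmx U (U *m h) h.
have XU k (X : 'M_(k, \rank U)) : (X *m row_base U <= U)%MS.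
  by apply: submx_trans (submxMl _ _) _; rewrite eq_row_base.
have sub_i k (X : 'M_(k, \rank U)) :
    (X <= i)%MS = (X *m row_base U <= kermx h)%MS.
  rewrite -(submxMfree _ _ (row_base_free U)) inducedmxK ?mulmx1 ?capmxSl //.
  by rewrite eq_row_base sub_capmx XU.
have sub_p k (X : 'M_(k, \rank U)) :
    (X <= kermx p)%MS = (X *m row_base U <= kermx h)%MS.
  rewrite !sub_kermx -(mulmx_free_eq0 _ (row_base_free (U *m h))).
  by rewrite -mulmxA inducedmxK ?submx_refl // mulmxA.
by rewrite sub_i -sub_p submx_refl sub_p -sub_i submx_refl.
Qed.

Definition preimmx m n p (h : 'M[F]_(m, n)) (Z : 'M[F]_(p, n)) : 'M[F]_m :=
  kermx (h *m cokermx Z).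

Lemma sub_preimmx m n p (h : 'M[F]_(m, n)) (Z : 'M[F]_(p, n))
    k (W : 'M[F]_(k, m)) :
  (W <= preimmx h Z)%MS = (W *m h <= Z)%MS.
Proof. by rewrite sub_kermx mulmxA -submxE. Qed.

Lemma mulmx_cap_preim m n p k r (X : 'M[F]_(m, n)) (Q : 'M[F]_(k, n))
    (h : 'M[F]_(n, p)) (Z : 'M[F]_(r, p)) :
  (forall q (W : 'M[F]_(q, n)), (W <= Q)%MS = (W *m h <= Z)%MS) ->
  ((X :&: Q) *m h :=: X *m h :&: Z)%MS.
Proof.
move=> subQ; apply/eqmxP/andP; split.
  by rewrite sub_capmx -subQ capmxSr submxMr ?capmxSl.
set Y := (X *m h :&: Z)%MS.
have WhY : Y *m pinvmx (X *m h) *m X *m h = Y.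
  by rewrite -mulmxA mulmxKpV // capmxSl.
by rewrite -{1}WhY submxMr // sub_capmx submxMl subQ WhY capmxSr.
Qed.

End InducedMatrices.

Section Modules.
Variables (K : fieldType) (L : falgType K).

Section SubModule.
Variables (M : rmod L) (r : nat) (U : 'M[K]_(r, rdim M)).
Hypothesis HU : is_submod U.

Let stable_row_base a : stablemx (row_base U) (ract M a).
Proof. by rewrite stablemx_row_base; apply: HU. Qed.

Definition subract (a : L) : 'M[K]_(\rank U) := restrictmx U (ract M a).

Lemma subractE a : subract a *m row_base U = row_base U *m ract M a.
Proof. exact: mulmxKpV (stable_row_base a). Qed.

Lemma subract_lin k a b : subract (k *: a + b) = k *: subract a + subract b.
Proof.
by rewrite /subract /conjmx ract_lin mulmxDr mulmxDl -!scalemxAr -scalemxAl.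
Qed.

Lemma subract1 : subract 1 = 1%:M.
Proof. by rewrite /subract ract1 conjmx_scalar ?row_base_free. Qed.

Lemma subractM a b : subract (a * b) = subract a *m subract b.
Proof. by rewrite /subract ractM conjmxM // inE. Qed.

Definition subrmod := @RMod K L (\rank U) subract subract_lin subract1 subractM.

Lemma row_base_hom : is_hom (M := subrmod) (N := M) (row_base U).
Proof. by move=> a; rewrite /= subractE. Qed.

End SubModule.

Lemma is_hom1 (M : rmod L) : is_hom (1%:M : 'M[K]_(rdim M)).
Proof. by move=> a; rewrite mulmx1 mul1mx. Qed.

Lemma is_hom_mulmx (A B D : rmod L) (f : 'M[K]_(rdim A, rdim B))
    (g : 'M[K]_(rdim B, rdim D)) :
  is_hom f -> is_hom g -> is_hom (f *m g).
Proof. by move=> hf hg a; rewrite mulmxA hf -mulmxA hg mulmxA. Qed.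

Lemma inducedmx_hom (M N : rmod L) r s (U : 'M[K]_(r, rdim M))
    (V : 'M[K]_(s, rdim N)) (HU : is_submod U) (HV : is_submod V)
    (h : 'M[K]_(rdim M, rdim N)) :
  is_hom h -> (U *m h <= V)%MS ->
  is_hom (M := subrmod HU) (N := subrmod HV) (inducedmx U V h).
Proof.
move=> hh sUhV a.
change (subract U a *m inducedmx U V h = inducedmx U V h *m subract V a).
apply: (row_free_inj (row_base_free V)) => /=.
rewrite -mulmxA inducedmxK // mulmxA (subractE HU) -mulmxA hh.
by rewrite -[RHS]mulmxA (subractE HV) [RHS]mulmxA inducedmxK // mulmxA.
Qed.

Section SubmodClosure.
Variables M N : rmod L.

Lemma is_submod1 : is_submod (1%:M : 'M[K]_(rdim M)).
Proof. by move=> a; apply: submx1. Qed.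

Lemma is_submodMr r (U : 'M[K]_(r, rdim M)) (h : 'M[K]_(rdim M, rdim N)) :
  is_submod U -> is_hom h -> is_submod (U *m h).
Proof. by move=> HU hh a; rewrite -mulmxA -hh mulmxA submxMr. Qed.

Lemma is_submod_ker (h : 'M[K]_(rdim M, rdim N)) :
  is_hom h -> is_submod (kermx h).
Proof. by move=> hh a; rewrite sub_kermx -mulmxA hh mulmxA mulmx_ker mul0mx. Qed.

Lemma is_submod_cap r s (U : 'M[K]_(r, rdim M)) (V : 'M[K]_(s, rdim M)) :
  is_submod U -> is_submod V -> is_submod (U :&: V)%MS.
Proof.
move=> HU HV a; rewrite sub_capmx.
by rewrite (submx_trans _ (HU a)) ?(submx_trans _ (HV a))
  ?submxMr ?capmxSl ?capmxSr.
Qed.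

Lemma is_submod_preimmx r (h : 'M[K]_(rdim M, rdim N))
    (Z : 'M[K]_(r, rdim N)) :
  is_hom h -> is_submod Z -> is_submod (preimmx h Z).
Proof.
move=> hh HZ a; rewrite sub_preimmx -mulmxA hh mulmxA.
by apply: submx_trans (HZ a); rewrite submxMr // -sub_preimmx.
Qed.

End SubmodClosure.

Section TorsionClass.
Variable G : rmod L -> Prop.
Hypothesis HG : torsion_class G.

Lemma inG_eqmx (M : rmod L) r s (U : 'M[K]_(r, rdim M)) (V : 'M[K]_(s, rdim M)) :
  (U :=: V)%MS -> inG G U -> inG G V.
Proof.
move=> eqUV [N [GN [h [hh free_h /eqmxP eq_hU]]]].
by exists N; split=> //; exists h; split=> //; apply/eqmxP/(eqmx_trans eq_hU).
Qed.

Lemma inG_subrmodP (M : rmod L) r (U : 'M[K]_(r, rdim M)) (HU : is_submod U) :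
  inG G U <-> G (subrmod HU).
Proof.
split=> [[N [GN [h [hh free_h eq_hU]]]] | GU]; last first.
  exists (subrmod HU); split=> //; exists (row_base U); split.
  - exact: row_base_hom.
  - exact: row_base_free.
  - exact/eqmxP/eq_row_base.
case: HG => Hiso _ _.
have sub_hU : (h <= row_base U)%MS by rewrite eq_row_base; case/andP: eq_hU.
pose phi : 'M[K]_(rdim N, rdim (subrmod HU)) := h *m pinvmx (row_base U).
have phiK : phi *m row_base U = h by rewrite mulmxKpV.
have rank_phi : \rank phi = \rank h.
  by rewrite -(mxrankMfree _ (row_base_free U)) phiK.
apply: (Hiso N _ phi) => //.
- move=> a; apply: (row_free_inj (row_base_free U)).
  by rewrite -mulmxA phiK -mulmxA row_base_hom mulmxA phiK hh.
- by rewrite /row_free rank_phi.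
- by rewrite /row_full rank_phi; move/eqmxP: eq_hU => ->.
Qed.

Lemma inG1 (M : rmod L) : G M -> inG G (1%:M : 'M[K]_(rdim M)).
Proof.
move=> GM; exists M; split=> //; exists 1%:M; split.
- exact: is_hom1.
- by rewrite /row_free mxrank1.
- by rewrite submx_refl.
Qed.

Lemma inGMr (M N : rmod L) r (U : 'M[K]_(r, rdim M)) (h : 'M[K]_(rdim M, rdim N)) :
  is_submod U -> is_hom h -> inG G U -> inG G (U *m h).
Proof.
move=> HU hh /(inG_subrmodP HU) GU; have HUh := is_submodMr HU hh.
apply/(inG_subrmodP HUh); case: HG => _ Hquo _.
apply: (Hquo (subrmod HU) (subrmod HUh) (inducedmx U (U *m h) h) _ _ GU).
- exact: inducedmx_hom.
- exact: row_full_inducedmx.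
Qed.

Lemma inG_ext (M N : rmod L) s (V : 'M[K]_(s, rdim M)) (h : 'M[K]_(rdim M, rdim N)) :
  is_submod V -> is_hom h -> inG G (V :&: kermx h)%MS -> inG G (V *m h) ->
  inG G V.
Proof.
move=> HV hh.
have HVk := is_submod_cap HV (is_submod_ker hh); have HVh := is_submodMr HV hh.
move=> /(inG_subrmodP HVk) GVk /(inG_subrmodP HVh) GVh; apply/(inG_subrmodP HV).
case: HG => _ _ Hext.
have sVk : ((V :&: kermx h) *m 1%:M <= V)%MS by rewrite mulmx1 capmxSl.
apply: (Hext (subrmod HVk) (subrmod HV) (subrmod HVh)
         (inducedmx (V :&: kermx h)%MS V 1%:M) (inducedmx V (V *m h) h)) GVk GVh.
- exact: inducedmx_hom (is_hom1 M) sVk.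
- exact: inducedmx_hom.
- by rewrite row_free_inducedmx // /row_free mxrank1.
- exact: row_full_inducedmx.
- exact: inducedmx_capker.
Qed.

Lemma subobject1 (M : rmod L) : G M -> subobject G (1%:M : 'M[K]_(rdim M)).
Proof. by move=> GM; split; [apply: is_submod1 | apply: inG1]. Qed.

Lemma subobjectMr (M N : rmod L) r (U : 'M[K]_(r, rdim M))
    (h : 'M[K]_(rdim M, rdim N)) :
  subobject G U -> is_hom h -> subobject G (U *m h).
Proof. by move=> [HU GU] hh; split; [apply: is_submodMr | apply: inGMr]. Qed.

Section Composition.
Variables A B D : rmod L.
Variables (f : 'M[K]_(rdim A, rdim B)) (g : 'M[K]_(rdim B, rdim D)).
Hypotheses (hf : is_hom f) (hg : is_hom g).

Lemma strict_subobject_kermx_comp :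
  G A -> strict_subobject G (kermx f) -> strict_subobject G (kermx g) ->
  strict_subobject G (kermx (f *m g)).
Proof.
move=> GA [_ strict_kf] [_ strict_kg]; have hfg := is_hom_mulmx hf hg.
have kf_kfg : (kermx f <= kermx (f *m g))%MS.
  by rewrite sub_kermx mulmxA mulmx_ker mul0mx.
have cap_kfg r (A' : 'M_(r, rdim A)) :
    subobject G A' -> inG G (kermx (f *m g) :&: A')%MS.
  move=> [HA' GA']; rewrite capmxC.
  apply: (inG_ext (is_submod_cap HA' (is_submod_ker hfg)) hf).
    apply: (inG_eqmx _ (strict_kf _ A' (conj HA' GA'))).
    apply/eqmxP/andP; split; rewrite !sub_capmx.
      by rewrite capmxSr capmxSl (submx_trans (capmxSl _ _) kf_kfg).
    by rewrite capmxSr (submx_trans (capmxSl _ _) (capmxSl _ _)).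
  have pre_kg q (W : 'M_(q, rdim A)) :
      (W <= kermx (f *m g))%MS = (W *m f <= kermx g)%MS.
    by rewrite !sub_kermx mulmxA.
  apply: (inG_eqmx (eqmx_sym (mulmx_cap_preim A' pre_kg))).
  by rewrite capmxC; apply: strict_kg; apply: subobjectMr.
split; last exact: cap_kfg.
split; first exact: is_submod_ker.
by have := cap_kfg _ _ (subobject1 GA); rewrite capmx1.
Qed.

Lemma subobject_preimmx r (D' : 'M[K]_(r, rdim D)) :
  inG G (kermx g) -> strict_subobject G g -> subobject G D' ->
  subobject G (preimmx g D').
Proof.
move=> Gkg [_ strict_g] [HD' GD']; have HP := is_submod_preimmx hg HD'.
split=> //; apply: (inG_ext HP hg).
  apply: (inG_eqmx _ Gkg); apply/eqmxP/andP; split; last exact: capmxSr.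
  by rewrite sub_capmx submx_refl andbT sub_preimmx mulmx_ker sub0mx.
have := mulmx_cap_preim 1%:M (sub_preimmx g D').
rewrite capmxC capmx1 mul1mx => eqPg.
exact: inG_eqmx (eqmx_sym eqPg) (strict_g _ D' (conj HD' GD')).
Qed.

Lemma strict_subobject_img_comp :
  inG G (kermx g) -> strict_subobject G f -> strict_subobject G g ->
  strict_subobject G (f *m g).
Proof.
move=> Gkg [[Hf Gf] strict_f] strict_g.
split=> [|r D' sD']; first exact: subobjectMr.
have [HP GP] := subobject_preimmx Gkg strict_g sD'.
apply: (inG_eqmx (mulmx_cap_preim f (sub_preimmx g D'))).
apply: inGMr (is_submod_cap Hf HP) hg _.
exact: strict_f _ _ (conj HP GP).
Qed.

End Composition.
End TorsionClass.
End Modules.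

Theorem mainTheorem4 (K : fieldType) (L : falgType K)
    (G : rmod L -> Prop) (HG : torsion_class G)
    (A B D : rmod L)
    (f : 'M[K]_(rdim A, rdim B)) (g : 'M[K]_(rdim B, rdim D)) :
  strict_morphism G f -> strict_morphism G g ->
  strict_morphism G (f *m g)%R.
Proof.
move=> [GA GB hf _ [strict_kf strict_f]] [_ GD hg Gkg [strict_kg strict_g]].
have strict_kfg := strict_subobject_kermx_comp HG hf hg GA strict_kf strict_kg.
split=> //; [exact: is_hom_mulmx | exact: strict_kfg.1.2 | split=> //].
exact: strict_subobject_img_comp.
Qed.
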